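(* Let $P$ be a finite graded bowtie-free poset of rank $n$ with $\hat0,\hat1$ and a good $\mathcal{H}_n(0)$ action $U_1,\dots,U_{n-1}$, let $\mathfrak m_0$ be the unique maximal chain with empty descent set, and let $\mathfrak m\ne\mathfrak m_0$ be a maximal chain. Suppose $U_{i_1}\cdots U_{i_r}(\mathfrak m)=\mathfrak m_0$ and $U_{j_1}\cdots U_{j_s}(\mathfrak m)=\mathfrak m_0$ are both restless. Then there exist a word in the braid class of $U_{i_1}\cdots U_{i_r}$ and a word in the braid class of $U_{j_1}\cdots U_{j_s}$ which both end on the right with the same letter $U_i$.
   Context: Bowtie-free: no distinct $a,b,c,d$ with $a$ and $b$ each covering both $c$ and $d$. A good $\mathcal{H}_n(0)$ action is a family $U_1,\dots,U_{n-1}$ of maps on the set $\mathcal{M}(P)$ of maximal chains with: $U_i(\mathfrak m)$ agrees with $\mathfrak m$ except possibly at rank $i$; $U_i^2=U_i$; $U_iU_j=U_jU_i$ for $|i-j|\ge2$; $U_iU_{i+1}U_i=U_{i+1}U_iU_{i+1}$; and $\omega F_P=\mathrm{ch}(\chi_P)$ ($\chi_P$ the character of the $\mathcal{H}_n(0)$-module $\mathbb{C}\mathcal{M}(P)$ with $T_i=-U_i$, $F_P$ Ehrenborg's flag quasisymmetric function $\sum x_1^{\mathrm{rk}(t_0,t_1)}\cdots x_k^{\mathrm{rk}(t_{k-1},t_k)}$ over multichains $\hat0=t_0\le\cdots\le t_{k-1}<t_k=\hat1$, $\omega(L_{S,n})=L_{[n-1]\setminus S,n}$ on Gessel's fundamental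 quasisymmetric functions, $\mathrm{ch}(\chi_S)=L_{S,n}$ for the one-dimensional characters $\chi_S$: $T_i\mapsto-1$ for $i\in S$, $0$ otherwise). The descent set of $\mathfrak m$ is $\{i:U_i(\mathfrak m)\ne\mathfrak m\}$; such a $P$ has exactly one maximal chain $\mathfrak m_0$ with empty descent set. An expression $U_{i_1}\cdots U_{i_r}(\mathfrak m)=\mathfrak m'$ is restless if $U_{i_r}(\mathfrak m)\ne\mathfrak m$ and $U_{i_j}\cdots U_{i_r}(\mathfrak m)\ne U_{i_{j+1}}\cdots U_{i_r}(\mathfrak m)$ for $j=1,\dots,r-1$. Two words are in the same braid class if one is obtained from the other by repeatedly applying $U_aU_b\leftrightarrow U_bU_a$ ($|a-b|\ge2$) and $U_aU_{a+1}U_a\leftrightarrow U_{a+1}U_aU_{a+1}$. *)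

From HB Require Import structures.
From mathcomp Require Import all_boot all_order all_algebra.
From mathcomp Require Import mpoly.
From Stdlib Require Relation_Operators.
Set Implicit Arguments. Unset Strict Implicit. Unset Printing Implicit Defensive.
Import GRing.Theory.
Local Open Scope ring_scope.

Section Poset.
Variables (T : finType) (le : rel T).

Definition plt (x y : T) : bool := (x != y) && le x y.
Definition covers (x y : T) : bool :=
  plt x y && [forall z, ~~ (plt x z && plt z y)].

Definition is_poset : Prop :=
  reflexive le /\ antisymmetric le /\ transitive le.

Definition graded (bot top : T) (rk : T -> nat) (n : nat) : Prop :=
  (forall x, le bot x) /\ (forall x, le x top) /\
  rk bot = 0%N /\ rk top = n /\ (forall x y, covers x y -> rk y = (rk x).+1).

Definition bowtie_free : Prop :=
  forall a b c d : T, uniq [:: a; b; c; d] ->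
    ~ [&& covers c a, covers d a, covers c b & covers d b].

Definition maxchain (bot top : T) (n : nat) (m : {ffun 'I_n.+1 -> T}) : bool :=
  [&& m ord0 == bot, m ord_max == top &
      [forall i : 'I_n, covers (m (widen_ord (leqnSn n) i)) (m (lift ord0 i))]].

(* U_{i_1} ... U_{i_r} (m) for the word w = [:: i_1; ...; i_r] *)
Definition applyw (n : nat) (U : nat -> {ffun 'I_n.+1 -> T} -> {ffun 'I_n.+1 -> T})
  (w : seq nat) (m : {ffun 'I_n.+1 -> T}) := foldr U m w.

Definition hecke_action (bot top : T) (n : nat)
  (U : nat -> {ffun 'I_n.+1 -> T} -> {ffun 'I_n.+1 -> T}) : Prop :=
  forall m, maxchain bot top m ->
    (forall i, (0 < i < n)%N ->
       [/\ maxchain bot top (U i m),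
           (forall j : 'I_n.+1, val j != i -> U i m j = m j) &
           U i (U i m) = U i m]) /\
    (forall i j, (0 < i < n)%N -> (0 < j < n)%N -> (i.+2 <= j)%N || (j.+2 <= i)%N ->
       U i (U j m) = U j (U i m)) /\
    (forall i, (0 < i)%N -> (i.+1 < n)%N ->
       U i (U i.+1 (U i m)) = U i.+1 (U i (U i.+1 m))).

(* subsets of [n-1] are encoded as sets S : {set 'I_n} with S \subset Dset n *)
Definition Dset (n : nat) : {set 'I_n} := [set i : 'I_n | (0 < val i)%N].
Definition inS (n : nat) (S : {set 'I_n}) (i : nat) : bool := [exists j in S, val j == i].

(* the one-dimensional character chi_S evaluated at T_{i_1}...T_{i_r} *)
Definition chiS (n : nat) (S : {set 'I_n}) (w : seq nat) : int :=
  \prod_(i <- w) (if inS S i then -1 else 0).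

(* chi_P(T_{i_1}...T_{i_r}) = trace of (-U_{i_1})...(-U_{i_r}) on C M(P) *)
Definition chiP (bot top : T) (n : nat)
  (U : nat -> {ffun 'I_n.+1 -> T} -> {ffun 'I_n.+1 -> T}) (w : seq nat) : int :=
  (-1) ^+ size w *
  (#|[pred m : {ffun 'I_n.+1 -> T} | maxchain bot top m && (applyw U w m == m)]|)%:Z.

(* quasisymmetric functions are handled through their restrictions to the
   variables x_1,...,x_N (here indexed 0,...,N-1); other variables set to 0 *)
Definition Xv (N : nat) (j : nat) : {mpoly int[N]} :=
  oapp (fun i : 'I_N => 'X_i) 0 (insub j).

Definition Fund (N n : nat) (S : {set 'I_n}) : {mpoly int[N]} :=
  \sum_(a : {ffun 'I_n -> 'I_N} |
        [forall j : 'I_n, forall k : 'I_n, (val k == (val j).+1) ==>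
           (if k \in S then (a j < a k)%N else (a j <= a k)%N)])
    \prod_(j : 'I_n) 'X_(a j).

Definition multichain (bot top : T) (k : nat) (t : {ffun 'I_k.+1 -> T}) : bool :=
  [&& t ord0 == bot, t ord_max == top,
      [forall j : 'I_k, le (t (widen_ord (leqnSn k) j)) (t (lift ord0 j))] &
      plt (t (inord k.-1)) (t ord_max)].

(* Ehrenborg's flag quasisymmetric function F_P restricted to N variables
   (terms with k > N vanish under this restriction) *)
Definition FP (bot top : T) (rk : T -> nat) (N : nat) : {mpoly int[N]} :=
  \sum_(1 <= k < N.+1)
    \sum_(t : {ffun 'I_k.+1 -> T} | multichain bot top t)
      \prod_(j < k) Xv N j ^+ (rk (t (lift ord0 j)) - rk (t (widen_ord (leqnSn k) j))).

(* good H_n(0) action: 0-Hecke relations and omega F_P = ch(chi_P).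
   c : coefficients of chi_P in the basis of the chi_S (so ch(chi_P) = sum c_S L_S);
   b : coefficients of F_P in the fundamental basis (so omega F_P = sum b_S L_{[n-1]\S}). *)
Definition good_action (bot top : T) (rk : T -> nat) (n : nat)
  (U : nat -> {ffun 'I_n.+1 -> T} -> {ffun 'I_n.+1 -> T}) : Prop :=
  hecke_action bot top U /\
  exists c : {set 'I_n} -> int,
    (forall w, all (fun i => (0 < i < n)%N) w ->
       chiP bot top U w = \sum_(S : {set 'I_n} | S \subset Dset n) c S * chiS S w) /\
    exists b : {set 'I_n} -> int,
      (forall N, FP bot top rk N = \sum_(S : {set 'I_n} | S \subset Dset n) b S *: Fund N S) /\
      (forall N, \sum_(S : {set 'I_n} | S \subset Dset n) b S *: Fund N (Dset n :\: S)
                 = \sum_(S : {set 'I_n} | S \subset Dset n) c S *: Fund N S).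

Definition restless (n : nat) (U : nat -> {ffun 'I_n.+1 -> T} -> {ffun 'I_n.+1 -> T})
  (w : seq nat) (m : {ffun 'I_n.+1 -> T}) : Prop :=
  forall j, (j < size w)%N -> applyw U (drop j w) m != applyw U (drop j.+1 w) m.

End Poset.

Inductive braid_step : seq nat -> seq nat -> Prop :=
| bs_comm (p q : seq nat) (a b : nat) :
    (b.+2 <= a)%N || (a.+2 <= b)%N ->
    braid_step (p ++ [:: a; b] ++ q) (p ++ [:: b; a] ++ q)
| bs_braid (p q : seq nat) (a : nat) :
    braid_step (p ++ [:: a; a.+1; a] ++ q) (p ++ [:: a.+1; a; a.+1] ++ q).

Definition braid_equiv : seq nat -> seq nat -> Prop :=
  Relation_Operators.clos_refl_sym_trans (seq nat) braid_step.

From HB Require Import structures.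
From mathcomp Require Import all_boot all_order all_algebra.
From mathcomp Require Import mpoly.
From mathcomp Require Import zify.
From Stdlib Require Import Relation_Operators.
Set Implicit Arguments. Unset Strict Implicit. Unset Printing Implicit Defensive.

(* Any two restless words [w], [w'] carrying [m] to [m0] are braid equivalent, so
   the conclusion holds with the last letter of [w]. Equivalence is proved by
   induction on length, comparing the last letters [a] and [b] of the two words.
   If [a = b] the remaining words are restless from [U_a m]. Otherwise both sides
   of the braid relation between [a] and [b] are restless from [m]: trivially when
   [|a - b| >= 2], and by bowtie-freeness when [|a - b| = 1]. A restless word [v]
   continues their common endpoint to [m0], because the word of the longest
   permutation absorbs every generator and so sends every chain that reaches [m0]
   to [m0]. Induction then identifies each word with [v] followed by one side of
   the braid relation. *)

Lemma braid_step_size u v : braid_step u v -> size u = size v.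
Proof. by case=> *; rewrite !size_cat. Qed.

Lemma braid_equiv_size u v : braid_equiv u v -> size u = size v.
Proof. by elim=> [x y /braid_step_size | | x y _ -> | x y z _ -> _ ->]. Qed.

Lemma braid_step_cat s t u v : braid_step u v -> braid_step (s ++ u ++ t) (s ++ v ++ t).
Proof.
case=> [p q a b ab | p q a]; rewrite -!catA;
  [have := bs_comm (s ++ p) (q ++ t) ab | have := bs_braid (s ++ p) (q ++ t) a];
  by rewrite -!catA.
Qed.

Lemma braid_equiv_cat u u' v v' :
  braid_equiv u u' -> braid_equiv v v' -> braid_equiv (u ++ v) (u' ++ v').
Proof.
have cong s t x y : braid_equiv x y -> braid_equiv (s ++ x ++ t) (s ++ y ++ t).
  elim=> [? ? st | ? | ? ? _ | ? ? ? _ + _].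
  - exact/rst_step/braid_step_cat.
  - exact: rst_refl.
  - exact: rst_sym.
  - exact: rst_trans.
move=> Eu /(cong u' [::]); rewrite !cats0; apply: rst_trans.
exact: (cong [::] v _ _ Eu).
Qed.

Lemma covers_neq (T : finType) (le : rel T) x y : covers le x y -> x != y.
Proof. by case/andP=> /andP[]. Qed.

Lemma bowtie_freeP (T : finType) (le : rel T) (c d x y : T) : bowtie_free le ->
  covers le c d -> covers le x d -> covers le c y -> covers le x y -> c = x \/ d = y.
Proof.
move=> bowtie cd xd cy xy.
have [-> | ncx] := eqVneq c x; first by left.
have [-> | ndy] := eqVneq d y; first by right.
case: (bowtie d y c x); last by rewrite cd xd cy xy.
rewrite /= !inE !negb_or ndy ncx.
rewrite ![d == _]eq_sym ![y == _]eq_sym.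
by rewrite (covers_neq cd) (covers_neq xd) (covers_neq cy) (covers_neq xy).
Qed.

Arguments applyw : simpl never.

Section HeckeAction.
Variables (T : finType) (le : rel T) (bot top : T) (n : nat)
  (U : nat -> {ffun 'I_n.+1 -> T} -> {ffun 'I_n.+1 -> T}).
Hypothesis HU : hecke_action le bot top U.
Local Notation mc := (maxchain le bot top).
Local Notation applyw := (applyw U).

Definition is_gen i := 0 < i < n.

Lemma applyw_cons i u c : applyw (i :: u) c = U i (applyw u c).
Proof. by []. Qed.

Lemma applyw_nil c : applyw [::] c = c.
Proof. by []. Qed.

Lemma applyw_cat u v c : applyw (u ++ v) c = applyw u (applyw v c).
Proof. exact: foldr_cat. Qed.

Lemma U_maxchain i c : is_gen i -> mc c -> mc (U i c).
Proof. by move=> gi /HU[/(_ i gi)[]]. Qed.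

Lemma U_agree i c (j : 'I_n.+1) : is_gen i -> mc c -> val j != i -> U i c j = c j.
Proof. by move=> gi /HU[/(_ i gi)[_ agree _] _]; apply: agree. Qed.

Lemma U_idem i c : is_gen i -> mc c -> U i (U i c) = U i c.
Proof. by move=> gi /HU[/(_ i gi)[]]. Qed.

Lemma U_comm i j c : is_gen i -> is_gen j -> (i.+2 <= j) || (j.+2 <= i) -> mc c ->
  U i (U j c) = U j (U i c).
Proof. by move=> gi gj ij /HU[_ [/(_ i j gi gj ij)]]. Qed.

Lemma U_braid i c : 0 < i -> i.+1 < n -> mc c ->
  U i (U i.+1 (U i c)) = U i.+1 (U i (U i.+1 c)).
Proof. by move=> i0 ilt /HU[_ [_ /(_ i i0 ilt)]]. Qed.

Lemma applyw_maxchain u c : all is_gen u -> mc c -> mc (applyw u c).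
Proof.
elim: u => //= i u IH /andP[gi gu] mcc.
by rewrite applyw_cons; apply/U_maxchain/IH.
Qed.

Lemma applyw_comm j s c : is_gen j -> all is_gen s ->
  all (fun i => (i.+2 <= j) || (j.+2 <= i)) s -> mc c ->
  applyw (s ++ [:: j]) c = U j (applyw s c).
Proof.
elim: s => //= i s IH gj /andP[gi gs] /andP[ij sj] mcc.
by rewrite !applyw_cons IH // U_comm // applyw_maxchain.
Qed.

(* [w0 k] is a reduced word of the longest permutation of S_(k+1). *)
Fixpoint dcycle k := if k is k'.+1 then k :: dcycle k' else [::].
Fixpoint w0 k := if k is k'.+1 then w0 k' ++ dcycle k else [::].

Lemma dcycle_bounds k : all (fun i => 0 < i <= k) (dcycle k).
Proof.
elim: k => //= k IH; rewrite leqnn /=.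
by apply: sub_all IH => i /andP[-> /= ?]; lia.
Qed.

Lemma dcycle_gen k : k < n -> all is_gen (dcycle k).
Proof. by move=> kn; apply: sub_all (dcycle_bounds k) => i; rewrite /is_gen; lia. Qed.

Lemma w0_gen k : k < n -> all is_gen (w0 k).
Proof. by elim: k => // k IH kn; rewrite all_cat IH ?dcycle_gen //; lia. Qed.

Lemma applyw_dcycle_U k i c : 2 <= i <= k -> k < n -> mc c ->
  applyw (dcycle k ++ [:: i]) c = U i.-1 (applyw (dcycle k) c).
Proof.
elim: k i c => [|k IH] i c ik kn mcc /=; first lia.
rewrite !applyw_cons.
have [-> | nik] := eqVneq i k.+1.
  case: k {IH} ik kn => [|k] ik kn /=; first lia.
  have mcd : mc (applyw (dcycle k) c) by rewrite applyw_maxchain ?dcycle_gen //; lia.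
  rewrite !applyw_cons applyw_comm ?dcycle_gen ?U_braid //; try lia.
  by apply: sub_all (dcycle_bounds k) => j; lia.
rewrite IH //; try lia.
by rewrite U_comm // ?applyw_maxchain ?dcycle_gen // /is_gen; lia.
Qed.

Lemma applyw_dcycle_U1 k c : 0 < k < n -> mc c ->
  applyw (dcycle k ++ [:: 1]) c = applyw (dcycle k) c.
Proof.
elim: k => [|[|k] IH] kn mcc //.
  by rewrite /= !applyw_cons U_idem // /is_gen; lia.
change (applyw (k.+2 :: (dcycle k.+1 ++ [:: 1])) c = applyw (k.+2 :: dcycle k.+1) c).
by rewrite applyw_cons [RHS]applyw_cons IH //; lia.
Qed.

(* In the 0-Hecke monoid [w0 * U_i = w0], since [w0] has a reduced word ending
   in [s_i]. *)
Lemma applyw_w0_U k i c : 0 < i <= k -> k < n -> mc c ->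
  applyw (w0 k) (U i c) = applyw (w0 k) c.
Proof.
elim: k i c => [|k IH] i c ik kn mcc; first lia.
rewrite -[w0 k.+1]/(w0 k ++ dcycle k.+1) !applyw_cat.
have -> : applyw (dcycle k.+1) (U i c) = applyw (dcycle k.+1 ++ [:: i]) c.
  by rewrite applyw_cat.
have [-> | ni1] := eqVneq i 1; first by rewrite applyw_dcycle_U1.
rewrite applyw_dcycle_U ?(IH i.-1) //; try lia.
by rewrite applyw_maxchain ?dcycle_gen.
Qed.

Definition wlong := w0 n.-1.

Lemma wlong_gen : all is_gen wlong.
Proof. by rewrite /wlong; case: (posnP n) => [-> // | n0]; apply: w0_gen; lia. Qed.

Lemma applyw_wlong s c : all is_gen s -> mc c -> applyw wlong (applyw s c) = applyw wlong c.
Proof.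
elim: s => //= i s IH /andP[gi gs] mcc.
by rewrite applyw_cons applyw_w0_U ?applyw_maxchain ?IH //; move: gi; rewrite /is_gen; lia.
Qed.

Lemma restless_cons i p c :
  restless U (i :: p) c <-> U i (applyw p c) != applyw p c /\ restless U p c.
Proof.
split=> [R | [moves R] [|j] /= jp]; last exact: R.
  by split=> [|j jp]; [move: (R 0 isT); rewrite /= drop0 | exact: (R j.+1)].
by rewrite drop0.
Qed.

Lemma restless_nil c : restless U [::] c.
Proof. by move=> j. Qed.

Lemma restless_cat p s c :
  restless U (p ++ s) c <-> restless U p (applyw s c) /\ restless U s c.
Proof.
elim: p => [|i p IH] /=; first by split=> [R | [_ R]] //; split=> //; apply: restless_nil.
rewrite !restless_cons IH applyw_cat.
by split=> [[? [? ?]] | [[? ?] ?]].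
Qed.

Lemma exists_restless u c : all is_gen u ->
  exists v, [/\ all is_gen v, applyw v c = applyw u c & restless U v c].
Proof.
elim: u => [_ | i u IH /= /andP[gi /IH[v [gv Ev Rv]]]]; first by exists [::].
have [fix_i | moves] := eqVneq (U i (applyw v c)) (applyw v c).
  by exists v; rewrite applyw_cons -Ev fix_i.
by exists (i :: v); rewrite /= gi applyw_cons Ev; split=> //; apply/restless_cons.
Qed.

Lemma maxchain_covers (c : {ffun 'I_n.+1 -> T}) k : mc c -> k < n ->
  covers le (c (inord k)) (c (inord k.+1)).
Proof.
move=> /and3P[_ _ /forallP cov] kn; have := cov (Ordinal kn).
by congr covers; congr fun_of_fin; apply: val_inj; rewrite /= inordK //; lia.
Qed.

Lemma U_agree_inord i c k : is_gen i -> mc c -> k <= n -> k != i ->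
  U i c (inord k) = c (inord k).
Proof. by move=> gi mcc kn ki; apply: U_agree; rewrite //= inordK. Qed.

Lemma U_moves_at i c : is_gen i -> mc c -> U i c != c -> U i c (inord i) != c (inord i).
Proof.
move=> gi mcc; apply: contra => /eqP Ei; apply/eqP/ffunP => j.
have [ji | /(U_agree gi mcc) //] := eqVneq (val j) i.
suff -> : j = inord i by [].
by rewrite -ji inord_val.
Qed.

Lemma U_moves_comm a b c : is_gen a -> is_gen b -> a != b -> mc c ->
  U a (U b c) = U b (U a c) -> U b c != c -> U b (U a c) != U a c.
Proof.
move=> ga gb ab mcc comm; have bn : b <= n by move: gb; rewrite /is_gen; lia.
have ba : b != a by rewrite eq_sym.
move=> mb; have := U_moves_at gb mcc mb; apply: contra_neq => E.
by rewrite -(U_agree_inord ga (U_maxchain gb mcc) bn ba) comm E U_agree_inord.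
Qed.

Hypothesis bowtie : bowtie_free le.

Lemma no_bowtie_chain a c (t : {ffun 'I_n.+1 -> T}) : 0 < a -> a.+1 < n ->
  mc c -> mc t -> U a c != c -> U a.+1 c != c ->
  t (inord a) = U a c (inord a) -> t (inord a.+1) = U a.+1 c (inord a.+1) -> False.
Proof.
move=> a0 an mcc mct ma mb ta tb.
have ga : is_gen a by rewrite /is_gen; lia.
have gb : is_gen a.+1 by rewrite /is_gen; lia.
have cov_c := maxchain_covers mcc (ltnW an).
have := maxchain_covers (U_maxchain ga mcc) (ltnW an).
rewrite (@U_agree_inord a c a.+1) //; [|lia|lia] => cov_a.
have := maxchain_covers (U_maxchain gb mcc) (ltnW an).
rewrite (@U_agree_inord a.+1 c a) //; [|lia|lia] => cov_b.
have := maxchain_covers mct (ltnW an); rewrite ta tb => cov_t.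
case: (bowtie_freeP bowtie cov_c cov_a cov_b cov_t) => /eqP.
  by rewrite eq_sym; apply/negP/U_moves_at.
by apply/negP; rewrite eq_sym; apply/U_moves_at.
Qed.

(* Bowtie-freeness is exactly what makes both sides of the braid relation
   restless from [c]. *)
Lemma restless_braid a c : 0 < a -> a.+1 < n -> mc c -> U a c != c -> U a.+1 c != c ->
  restless U [:: a; a.+1] (U a c) /\ restless U [:: a.+1; a] (U a.+1 c).
Proof.
move=> a0 an mcc ma mb.
have ga : is_gen a by rewrite /is_gen; lia.
have gb : is_gen a.+1 by rewrite /is_gen; lia.
have braid := U_braid a0 an mcc.
have [mca mcb] := (U_maxchain ga mcc, U_maxchain gb mcc).
have za : U a (U a.+1 (U a c)) (inord a) != U a c (inord a).
  apply/eqP => E; apply: (no_bowtie_chain a0 an mcc (U_maxchain ga mcb) ma mb).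
    by rewrite -E braid [RHS]U_agree_inord ?U_maxchain //; lia.
  by rewrite U_agree_inord //; lia.
have zb : U a.+1 (U a (U a.+1 c)) (inord a.+1) != U a.+1 c (inord a.+1).
  apply/eqP => E; apply: (no_bowtie_chain a0 an mcc (U_maxchain gb mca) ma mb).
    by rewrite U_agree_inord //; lia.
  by rewrite -E -braid [RHS]U_agree_inord ?U_maxchain //; lia.
split; apply/restless_cons; split;
  [| apply/restless_cons; split; last exact: restless_nil | |
     apply/restless_cons; split; last exact: restless_nil];
  rewrite ?applyw_cons ?applyw_nil; [move: za | move: za | move: zb | move: zb];
  apply: contra_neq => ->.
- by rewrite U_agree_inord ?U_maxchain //; lia.
- by rewrite U_idem.
- by rewrite U_agree_inord ?U_maxchain //; lia.
- by rewrite U_idem.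
Qed.

Definition braid_join c a b sa sb :=
  [/\ all is_gen (sa ++ sb), restless U sa (U a c), restless U sb (U b c),
      applyw sa (U a c) = applyw sb (U b c) & braid_equiv (sa ++ [:: a]) (sb ++ [:: b])].

Lemma local_braid_confluence a b c : is_gen a -> is_gen b -> a != b -> mc c ->
  U a c != c -> U b c != c -> exists sa sb, braid_join c a b sa sb.
Proof.
wlog ab : a b / a < b => [hyp ga gb nab mcc ma mb | ga gb _ mcc ma mb].
  case: (ltngtP a b) => [ab | ba | eab]; [exact: hyp | | by rewrite eab eqxx in nab].
  have [sa [sb [gs ? ? ? ?]]] := hyp b a ba gb ga (negbT (ltn_eqF ba)) mcc mb ma.
  by exists sb, sa; split=> //; [rewrite all_cat andbC -all_cat | apply: rst_sym].
have [far | ] := boolP (a.+2 <= b).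
  have comm : U a (U b c) = U b (U a c) by rewrite U_comm ?far.
  exists [:: b], [:: a]; split=> /=; rewrite ?ga ?gb //.
  - apply/restless_cons; split; last exact: restless_nil.
    exact: U_moves_comm ga gb (negbT (ltn_eqF ab)) mcc comm mb.
  - apply/restless_cons; split; last exact: restless_nil.
    exact: U_moves_comm gb ga (negbT (gtn_eqF ab)) mcc (esym comm) ma.
  - by apply/rst_step/(bs_comm [::] [::]); rewrite far.
rewrite -ltnNge ltnS => ba; have eb : b = a.+1 by apply/eqP; rewrite eqn_leq ab ba.
subst b.
have a0 : 0 < a by move: ga; rewrite /is_gen; lia.
have an : a.+1 < n by move: gb; rewrite /is_gen; lia.
have [Ra Rb] := restless_braid a0 an mcc ma mb.
exists [:: a; a.+1], [:: a.+1; a]; split; rewrite /= ?ga ?gb //.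
  by rewrite !applyw_cons !applyw_nil U_braid.
exact/rst_step/(bs_braid [::] [::]).
Qed.

Variable m0 : {ffun 'I_n.+1 -> T}.
Hypothesis m0_fixed : forall i, is_gen i -> U i m0 = m0.

Lemma applyw_m0 u : all is_gen u -> applyw u m0 = m0.
Proof. by elim: u => //= i u IH /andP[gi /IH]; rewrite applyw_cons => ->; apply: m0_fixed. Qed.

Lemma restless_m0 p : all is_gen p -> restless U p m0 -> p = [::].
Proof.
case: p => //= i p /andP[gi gp] /restless_cons[+ _].
by rewrite applyw_m0 // m0_fixed ?eqxx.
Qed.

Lemma applyw_wlong_m0 u c : all is_gen u -> mc c -> applyw u c = m0 -> applyw wlong c = m0.
Proof. by move=> gu mcc Eu; rewrite -(applyw_wlong gu mcc) Eu applyw_m0 // wlong_gen. Qed.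

Definition braid_unique_upto k := forall c p q, mc c -> all is_gen p -> all is_gen q ->
  restless U p c -> restless U q c -> applyw p c = m0 -> applyw q c = m0 ->
  size p <= k -> braid_equiv p q.

Lemma braid_equiv_rcons k c p q a b sa sb : braid_unique_upto k -> mc c ->
  is_gen a -> is_gen b -> all is_gen p -> all is_gen q ->
  restless U p (U a c) -> restless U q (U b c) ->
  applyw p (U a c) = m0 -> applyw q (U b c) = m0 -> size p <= k ->
  braid_join c a b sa sb -> braid_equiv (rcons p a) (rcons q b).
Proof.
move=> IH mcc ga gb gp gq Rp Rq Ep Eq pk [].
rewrite all_cat => /andP[gsa gsb] Rsa Rsb Eab Bab.
have [mca mcb] := (U_maxchain ga mcc, U_maxchain gb mcc).
have z_m0 : applyw wlong (applyw sa (U a c)) = m0.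
  have := @applyw_wlong (sa ++ [:: a]) c.
  rewrite applyw_cat applyw_cons applyw_nil all_cat gsa /= ga => -> //.
  by apply: (@applyw_wlong_m0 (rcons p a)); rewrite ?all_rcons ?ga // -cats1 applyw_cat.
have [v [gv Ev Rv]] := exists_restless (applyw sa (U a c)) wlong_gen.
rewrite z_m0 in Ev.
have Epv : braid_equiv p (v ++ sa).
  apply: IH mca gp _ Rp _ Ep _ pk; rewrite ?all_cat ?gv ?applyw_cat //.
  exact/restless_cat.
have Evq : braid_equiv (v ++ sb) q.
  apply: IH mcb _ gq _ Rq _ Eq _; rewrite ?all_cat ?gv ?applyw_cat -?Eab //.
    by apply/restless_cat; rewrite -Eab.
  move: (braid_equiv_size Epv) (braid_equiv_size Bab).
  by rewrite !size_cat !addn1 => size_p [<-]; rewrite -size_p.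
rewrite -!cats1.
apply: rst_trans (braid_equiv_cat Epv (rst_refl _ _ [:: a])) _; rewrite -catA.
apply: rst_trans (braid_equiv_cat (rst_refl _ _ v) Bab) _; rewrite catA.
exact: braid_equiv_cat Evq (rst_refl _ _ _).
Qed.

Lemma braid_unique_upto_all k : braid_unique_upto k.
Proof.
elim: k => [|k IH] c p q mcc gp gq Rp Rq Ep Eq pk.
  case: p gp Rp pk Ep => // _ _ _; rewrite applyw_nil => Ec; subst c.
  by rewrite (restless_m0 gq Rq); apply: rst_refl.
have [Ec | nc] := eqVneq c m0.
  subst c; rewrite (restless_m0 gp Rp) (restless_m0 gq Rq); exact: rst_refl.
case/lastP: p gp Rp Ep pk => [_ _ | p a].
  by rewrite applyw_nil => Ec; rewrite Ec eqxx in nc.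
case/lastP: q gq Rq Eq => [_ _ | q b].
  by rewrite applyw_nil => Ec; rewrite Ec eqxx in nc.
rewrite !all_rcons -!cats1 !restless_cat !applyw_cat size_cat addn1 ltnS.
move=> /andP[gb gq] [Rq /restless_cons[mb _]] Eq /andP[ga gp] [Rp /restless_cons[ma _]] Ep pk.
have [eab | nab] := eqVneq a b.
  subst b; apply: braid_equiv_cat (rst_refl _ _ _).
  exact: IH (U_maxchain ga mcc) gp gq Rp Rq Ep Eq pk.
have [sa [sb J]] := local_braid_confluence ga gb nab mcc ma mb.
rewrite !cats1; exact: braid_equiv_rcons IH mcc ga gb gp gq Rp Rq Ep Eq pk J.
Qed.

Lemma restless_braid_equiv c p q : mc c -> all is_gen p -> all is_gen q ->
  restless U p c -> restless U q c -> applyw p c = m0 -> applyw q c = m0 ->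
  braid_equiv p q.
Proof.
move=> mcc gp gq Rp Rq Ep Eq.
exact: (braid_unique_upto_all mcc gp gq Rp Rq Ep Eq (leqnn _)).
Qed.

End HeckeAction.

Theorem mainTheorem11 (T : finType) (le : rel T) (bot top : T) (rk : T -> nat)
  (n : nat) (U : nat -> {ffun 'I_n.+1 -> T} -> {ffun 'I_n.+1 -> T})
  (m0 m : {ffun 'I_n.+1 -> T}) (w w' : seq nat) :
  is_poset le -> graded le bot top rk n -> bowtie_free le ->
  good_action le bot top rk U ->
  maxchain le bot top m0 -> (forall i, (0 < i < n)%N -> U i m0 = m0) ->
  maxchain le bot top m -> m != m0 ->
  all (fun i => (0 < i < n)%N) w -> all (fun i => (0 < i < n)%N) w' ->
  applyw U w m = m0 -> applyw U w' m = m0 ->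
  restless U w m -> restless U w' m ->
  exists (p q : seq nat) (i : nat),
    braid_equiv w (rcons p i) /\ braid_equiv w' (rcons q i).
Proof.
move=> _ _ bowtie [HU _] _ m0_fixed mcm nm gw gw' Ew Ew' Rw Rw'.
have Eww' := restless_braid_equiv HU bowtie m0_fixed mcm gw gw' Rw Rw' Ew Ew'.
case/lastP: w {gw Rw} Ew Eww' => [|p i].
  by rewrite applyw_nil => Em; rewrite Em eqxx in nm.
by exists p, p, i; split; [apply: rst_refl | apply: rst_sym].
Qed.
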